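(* Let $T$ be a decomposition tree of a distance-hereditary graph $G$, and let $v$ be an internal node of $T$ labeled $\odot$ with left child $v_l$ and right child $v_r$, such that property (P) holds at $v_l$ and at $v_r$. Then $\hat\beta(v)=\hat\beta(v_l)+\hat\beta(v_r)$.
   Context: All graphs are finite, simple, undirected. For a graph $H$ and $S\subseteq V(H)$, $N_H[S]$ is $S$ together with all vertices adjacent to a vertex of $S$, and $H[S]$ is the induced subgraph. Graphs carry a ''twin set'': a single-vertex graph on $x$ has twin set $\{x\}$. For vertex-disjoint graphs $G_l,G_r$ with twin sets $TS(G_l),TS(G_r)$: the true twin operation $G_l\otimes G_r$ has vertex set $V(G_l)\cup V(G_r)$, edge set $E(G_l)\cup E(G_r)\cup\{uw: u\in TS(G_l), w\in TS(G_r)\}$ and twin set $TS(G_l)\cup TS(G_r)$; the false twin operation $G_l\odot G_r$ has vertex set $V(G_l)\cup V(G_r)$, edge set $E(G_l)\cup E(G_r)$, twin set $TS(G_l)\cup TS(G_r)$; the attachment operation $G_l\oplus G_r$ has the same vertex and edge sets as $G_l\otimes G_r$ and twin set $TS(G_l)$. A decomposition tree $T$ of $G$ is a rooted binary tree whose leaves are in bijection with $V(G)$, each internal node having a left and a right child and a label in $\{\otimes,\odot,\oplus\}$; for each node $v$ define $\hat G(v)$ and $\hat{TS}(v)$ recursively: for a leaf $x$, the single-vertex graph on $x$ with twin set $\{x\}$; for an internal node $v$ with label $\circ$ and children $v_l,v_r$, $\hat G(v)=\hat G(v_l)\circ\hat G(v_r)$ with the corresponding twin set; one requires $\hat G(\text{root})=G$.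 Then $\hat G(v)$ is the subgraph of $G$ induced by the set $\hat V(v)$ of leaves below $v$. For a node $u$ and $0\le k\le|\hat{TS}(u)|$, call $S\subseteq\hat V(u)$ $k$-feasible if $\hat V(u)\setminus\hat{TS}(u)\subseteq N_{\hat G(u)}[S]$ and there is $X\subseteq S\cap\hat{TS}(u)$ with $|X|=k$ such that $\hat G(u)[S\setminus X]$ has a perfect matching. $\hat\gamma_k(u)$ is the minimum size of a $k$-feasible set. $\hat{min}(u)=\min\{\hat\gamma_k(u):0\le k\le|\hat{TS}(u)|\}$, and $\hat\alpha(u)$, $\hat\beta(u)$ are the smallest and the largest $k$ with $\hat\gamma_k(u)=\hat{min}(u)$. Property (P) holds at $u$ if for every $0\le k\le|\hat{TS}(u)|$: $\hat\gamma_k(u)=\hat{min}(u)+\hat\alpha(u)-k$ when $k\le\hat\alpha(u)$; $\hat\gamma_k(u)=\hat{min}(u)+k-\hat\beta(u)$ when $k\ge\hat\beta(u)$; $\hat\gamma_k(u)=\hat{min}(u)$ when $\hat\alpha(u)<k<\hat\beta(u)$ and $k-\hat\alpha(u)$ is even; and $\hat\gamma_k(u)=\hat{min}(u)+1$ otherwise. *)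

From mathcomp Require Import all_boot.
Set Implicit Arguments. Unset Strict Implicit. Unset Printing Implicit Defensive.

Definition simple_graph (T : finType) (G : rel T) : Prop :=
  symmetric G /\ irreflexive G.

(* a walk of length (size p) from u to v using only vertices of S *)
Definition walk_in (T : finType) (G : rel T) (S : {set T}) (u v : T) (p : seq T) : Prop :=
  u \in S /\ path (fun a b => G a b && (b \in S)) u p /\ last u p = v.

(* G is distance-hereditary: in every induced subgraph G[S] in which u and v
   are connected, dist_{G[S]}(u,v) = dist_G(u,v); i.e. (as dist_{G[S]} >= dist_G
   always) for every walk of length n from u to v in G there is a walk of
   length <= n from u to v inside G[S]. *)
Definition distance_hereditary (T : finType) (G : rel T) : Prop :=
  forall (S : {set T}) (u v : T),
    (exists p, walk_in G S u v p) ->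
    forall p, walk_in G setT u v p ->
    exists q, walk_in G S u v q /\ size q <= size p.

Inductive dlabel := TrueTwin (* ⊗ *) | FalseTwin (* ⊙ *) | Attach (* ⊕ *).

Inductive dtree (T : Type) :=
| Leaf of T
| Node of dlabel & dtree T & dtree T.
Arguments Leaf {T}.
Arguments Node {T}.

Fixpoint leaves (T : Type) (t : dtree T) : seq T :=
  match t with Leaf x => [:: x] | Node _ l r => leaves l ++ leaves r end.

Definition hV (T : finType) (t : dtree T) : {set T} := [set x in leaves t].

Fixpoint hTS (T : finType) (t : dtree T) : {set T} :=
  match t with
  | Leaf x => [set x]
  | Node TrueTwin l r => hTS l :|: hTS r
  | Node FalseTwin l r => hTS l :|: hTS r
  | Node Attach l _ => hTS l
  end.

Fixpoint hE (T : finType) (t : dtree T) : rel T :=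
  match t with
  | Leaf _ => fun _ _ => false
  | Node FalseTwin l r => fun x y => hE l x y || hE r x y
  | Node _ l r => fun x y =>
      [|| hE l x y, hE r x y,
          (x \in hTS l) && (y \in hTS r) | (y \in hTS l) && (x \in hTS r)]
  end.

Definition decomp_tree (T : finType) (G : rel T) (t : dtree T) : Prop :=
  uniq (leaves t) /\ (forall x, x \in leaves t) /\ (forall x y, G x y = hE t x y).

Fixpoint is_node (T : Type) (v t : dtree T) : Prop :=
  v = t \/ match t with Leaf _ => False | Node _ l r => is_node v l \/ is_node v r end.

Definition cnbhd (T : finType) (u : dtree T) (S : {set T}) : {set T} :=
  S :|: [set y in hV u | [exists x in S, hE u x y]].

Definition has_pm (T : finType) (e : rel T) (W : {set T}) : bool :=
  [exists M : {set {set T}},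
    [forall m in M, [&& #|m| == 2, m \subset W &
                        [forall x in m, forall y in m, (x != y) ==> e x y]]] &&
    [forall x in W, #|[set m in M | x \in m]| == 1]].

Definition kfeasible (T : finType) (u : dtree T) (k : nat) (S : {set T}) : bool :=
  [&& S \subset hV u, (hV u :\: hTS u) \subset cnbhd u S &
      [exists X : {set T}, [&& X \subset S :&: hTS u, #|X| == k &
                               has_pm (hE u) (S :\: X)]]].

(* \hat gamma_k(u); None = no k-feasible set (value +infinity).
   When some feasible set exists, the minimum over them is taken with the
   neutral element #|T| (an upper bound for every set size). *)
Definition hgamma (T : finType) (u : dtree T) (k : nat) : option nat :=
  if [exists S, kfeasible u k S]
  then Some (\big[minn/#|T|]_(S : {set T} | kfeasible u k S) #|S|)
  else None.

Definition hmin (T : finType) (u : dtree T) : option nat :=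
  if [exists k : 'I_(#|hTS u|.+1), hgamma u k != None]
  then Some (\big[minn/#|T|]_(k < #|hTS u|.+1 | hgamma u k != None)
               odflt 0 (hgamma u k))
  else None.

Definition halpha (T : finType) (u : dtree T) : nat :=
  \big[minn/#|hTS u|]_(k < #|hTS u|.+1 | hgamma u k == hmin u) k.

Definition hbeta (T : finType) (u : dtree T) : nat :=
  \max_(k < #|hTS u|.+1 | hgamma u k == hmin u) k.

Definition propP (T : finType) (u : dtree T) : Prop :=
  exists m, hmin u = Some m /\
  forall k, k <= #|hTS u| ->
    hgamma u k =
      Some (if k <= halpha u then m + halpha u - k
            else if hbeta u <= k then m + k - hbeta u
            else if ~~ odd (k - halpha u) then m
            else m + 1).

From mathcomp Require Import all_boot order zify.
Set Implicit Arguments. Unset Strict Implicit. Unset Printing Implicit Defensive.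
Import Order.TTheory.

(* At a false-twin node v the graph G(v) is the disjoint union of G(v_l) and
   G(v_r), and TS(v) is the union of the two twin sets.  A k-feasible set of v,
   its twin witness X and the perfect matching of S \ X therefore split along
   this union into a k1-feasible set of v_l and a k2-feasible set of v_r with
   k = k1 + k2, and conversely.  Hence gamma_k(v) is the minimum of
   gamma_k1(v_l) + gamma_k2(v_r) over k1 + k2 = k, so min(v) = min(v_l) + min(v_r),
   and gamma_k(v) attains it exactly when k splits into indices at which both
   children attain their minima; the largest such k is beta(v_l) + beta(v_r). *)

Section PerfectMatching.
Variable T : finType.
Implicit Types (e : rel T) (W A : {set T}) (M : {set {set T}}).

Definition perfect_matching e W M : Prop :=
  (forall m, m \in M -> [/\ #|m| = 2, m \subset W & {in m &, forall x y, x != y -> e x y}]) /\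
  {in W, forall x, #|[set m in M | x \in m]| = 1}.

Lemma has_pmP e W : reflect (exists M, perfect_matching e W M) (has_pm e W).
Proof.
apply: (iffP existsP) => [[M /andP[/forall_inP edgesM /forall_inP coverM]]|].
  exists M; split=> [m /edgesM/and3P[/eqP c s /forall_inP adj]|x /coverM/eqP //].
  by split=> // x y /adj/forall_inP adjx /adjx/implyP.
case=> M [edgesM coverM]; exists M; apply/andP; split; apply/forall_inP.
  move=> m /edgesM[c s adj]; rewrite c s eqxx; apply/forall_inP => x xm.
  by apply/forall_inP => y ym; apply/implyP; apply: adj.
by move=> x /coverM ->.
Qed.

Lemma perfect_matching_mono e e' W M :
  {in W &, forall x y, e x y -> e' x y} ->
  perfect_matching e W M -> perfect_matching e' W M.
Proof.
move=> ee' [edgesM coverM]; split=> // m /edgesM[c s adj]; split=> // x y xm ym xy.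
by apply: ee'; [apply: (subsetP s) .. | apply: adj].
Qed.

Lemma matched_setU W' M M' x : x \notin W' -> (forall m, m \in M' -> m \subset W') ->
  [set m in M :|: M' | x \in m] = [set m in M | x \in m].
Proof.
move=> xW' sM'; apply/setP => m; rewrite !inE andb_orl.
case: (boolP (m \in M')) => [/sM' /subsetP sm|]; last by rewrite orbF.
case: (boolP (x \in m)) => [/sm xW|]; last by rewrite !andbF.
by rewrite xW in xW'.
Qed.

Lemma perfect_matchingU e W1 W2 M1 M2 : [disjoint W1 & W2] ->
  perfect_matching e W1 M1 -> perfect_matching e W2 M2 ->
  perfect_matching e (W1 :|: W2) (M1 :|: M2).
Proof.
move=> dW [edges1 cover1] [edges2 cover2]; split.
  move=> m /setUP[/edges1|/edges2] [c s adj]; split=> //; apply: subset_trans s _.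
    exact: subsetUl.
  exact: subsetUr.
move=> x /setUP[xW1|xW2].
  by rewrite (@matched_setU W2) ?cover1 ?(disjointFr dW) // => m /edges2[].
by rewrite setUC (@matched_setU W1) ?cover2 ?(disjointFl dW) // => m /edges1[].
Qed.

Lemma perfect_matchingI e W A M :
  {in W &, forall x y, e x y -> (x \in A) = (y \in A)} -> perfect_matching e W M ->
  perfect_matching e (W :&: A) [set m in M | m \subset A].
Proof.
move=> closedA [edgesM coverM]; split.
  by move=> m; rewrite inE => /andP[/edgesM[c s adj] mA]; rewrite subsetI s mA.
move=> x; rewrite inE => /andP[xW xA]; rewrite -(coverM x xW); apply: eq_card => m.
rewrite !inE; case: (boolP (m \in M)) => //= mM.
case: (boolP (x \in m)) => [xm|]; rewrite ?andbF // andbT.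
have [_ /subsetP s adj] := edgesM m mM; apply/subsetP => y ym.
have [<- // | xy] := eqVneq x y.
by rewrite -(closedA x y (s x xm) (s y ym) (adj x y xm ym xy)).
Qed.

End PerfectMatching.

Section DecompositionTree.
Variable T : finType.
Implicit Types (u v t l r : dtree T) (S : {set T}).

Lemma hV_Node lab l r : hV (Node lab l r) = hV l :|: hV r.
Proof. by apply/setP => x; rewrite !inE mem_cat. Qed.

Lemma hTS_subset u : hTS u \subset hV u.
Proof.
elim: u => [x|[] l sl r sr]; rewrite ?hV_Node /=; first by rewrite /hV sub1set inE mem_seq1.
- exact: setUSS.
- exact: setUSS.
- exact: subset_trans sl (subsetUl _ _).
Qed.

Lemma hE_hV u x y : hE u x y -> (x \in hV u) && (y \in hV u).
Proof.
have tsV w z : z \in hTS w -> z \in hV w := subsetP (hTS_subset w) z.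
elim: u => [//|lab l IHl r IHr]; rewrite hV_Node !in_setU.
have twin_edge : [|| hE l x y, hE r x y, (x \in hTS l) && (y \in hTS r)
                  | (y \in hTS l) && (x \in hTS r)] ->
    ((x \in hV l) || (x \in hV r)) && ((y \in hV l) || (y \in hV r)).
  case/or4P=> [/IHl/andP[xl yl]|/IHr/andP[xr yr]|/andP[/tsV xl /tsV yr]|/andP[/tsV yl /tsV xr]];
  by rewrite ?xl ?yl ?xr ?yr ?orbT.
case: lab; [exact: twin_edge | | exact: twin_edge].
by case/orP=> [/IHl/andP[xl yl]|/IHr/andP[xr yr]]; rewrite ?xl ?yl ?xr ?yr ?orbT.
Qed.

Lemma in_cnbhd u S y :
  (y \in cnbhd u S) = (y \in S) || (y \in hV u) && [exists x in S, hE u x y].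
Proof. by rewrite !inE. Qed.

Lemma kfeasibleP u k S :
  reflect [/\ S \subset hV u, hV u :\: hTS u \subset cnbhd u S &
             exists X : {set T}, [/\ X \subset S :&: hTS u, #|X| = k & has_pm (hE u) (S :\: X)]]
          (kfeasible u k S).
Proof.
apply: (iffP and3P) => [[sS dom /existsP[X /and3P[sX /eqP cX pmX]]]|[sS dom [X [sX cX pmX]]]].
  by split=> //; exists X.
by split=> //; apply/existsP; exists X; rewrite sX cX eqxx.
Qed.

Lemma is_node_uniq v t : is_node v t -> uniq (leaves t) -> uniq (leaves v).
Proof.
elim: t => [x|lab l IHl r IHr] /= [-> //|node_v] //.
by rewrite cat_uniq => /and3P[ul _ ur]; case: node_v => [/IHl|/IHr]; apply.
Qed.

Lemma uniq_disjoint_hV lab l r : uniq (leaves (Node lab l r)) -> [disjoint hV l & hV r].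
Proof.
rewrite /= cat_uniq => /and3P[_ lr _]; apply/pred0P => x /=; rewrite !inE.
by apply: contraNF lr => /andP[xl xr]; apply/hasP; exists x.
Qed.

End DecompositionTree.

Section GammaMinBeta.
Variable T : finType.
Implicit Types (u : dtree T) (S : {set T}).

Lemma hgamma_feasible u k a : hgamma u k = Some a -> exists2 S, kfeasible u k S & #|S| = a.
Proof.
rewrite /hgamma; case: existsP => // -[S0 feasS0] [<-].
by have [S feasS ->] := eq_bigmin (T := nat) _ _ _ feasS0 (fun S _ => max_card S); exists S.
Qed.

Lemma kfeasible_hgamma u k S : kfeasible u k S -> exists2 a, hgamma u k = Some a & a <= #|S|.
Proof.
move=> feasS; rewrite /hgamma; case: existsP => [_|[]]; last by exists S.
by eexists; [reflexivity | exact: (bigmin_le_cond (T := nat))].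
Qed.

Lemma hgamma_bound u k a : hgamma u k = Some a -> k <= #|hTS u|.
Proof.
case/hgamma_feasible=> S /kfeasibleP[_ _ [X [sX <- _]]] _.
by rewrite subset_leq_card // (subset_trans sX) ?subsetIr.
Qed.

Lemma hminP u m : hmin u = Some m <->
  (exists k, hgamma u k = Some m) /\ (forall k a, hgamma u k = Some a -> m <= a).
Proof.
pose ks := 'I_#|hTS u|.+1.
have in_range k a : hgamma u k = Some a -> hgamma u (inord k : ks) = Some a.
  by move=> Gk; rewrite inordK ?ltnS ?(hgamma_bound Gk).
have leT (k : ks) : hgamma u k != None -> odflt 0 (hgamma u k) <= #|T|.
  by case Gk: hgamma => [a|] // _; have [S _ <-] := hgamma_feasible Gk; apply: max_card.
have le_min k a : hgamma u k = Some a ->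
    \big[minn/#|T|]_(i : ks | hgamma u i != None) odflt 0 (hgamma u i) <= a.
  move=> /in_range Gk; have := bigmin_le_cond (T := nat) (P := fun i : ks => hgamma u i != None)
    (j := inord k) #|T| (fun i => odflt 0 (hgamma u i)).
  by rewrite Gk; apply.
rewrite /hmin; split.
  case: existsP => // -[k0 Gk0] [<-]; split; last by move=> k a /le_min.
  have [k Gk ->] := eq_bigmin (T := nat) k0 (fun i : ks => hgamma u i != None)
    (fun i => odflt 0 (hgamma u i)) Gk0 leT.
  by exists k; case: (hgamma u k) (Gk : hgamma u k != None).
case=> -[k Gk] minm; case: existsP => [_|[]]; last by exists (inord k); rewrite (in_range _ _ Gk).
congr Some; apply/eqP; rewrite eqn_leq (le_min _ _ Gk) /=; apply/(bigmin_geP (T := nat)); split.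
  by have [S _ <-] := hgamma_feasible Gk; apply: max_card.
by move=> i; case Gi: hgamma => [a|] // _; apply: minm Gi.
Qed.

Lemma hmin_le u m k a : hmin u = Some m -> hgamma u k = Some a -> m <= a.
Proof. by move=> /hminP[_ min_m] /min_m. Qed.

Lemma leq_hbeta u m k : hmin u = Some m -> hgamma u k = Some m -> k <= hbeta u.
Proof.
move=> Hm Gk; have k_lt : k < #|hTS u|.+1 by rewrite ltnS (hgamma_bound Gk).
by rewrite /hbeta (leq_bigmax_cond (Ordinal k_lt)) //= Gk Hm.
Qed.

Lemma hgamma_hbeta u m : hmin u = Some m -> hgamma u (hbeta u) = Some m.
Proof.
move=> Hm; have [[k Gk] _] := (hminP u m).1 Hm.
have k_lt : k < #|hTS u|.+1 by rewrite ltnS (hgamma_bound Gk).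
have Pk : (fun i : 'I_#|hTS u|.+1 => hgamma u i == hmin u) (Ordinal k_lt) by rewrite /= Gk Hm.
by rewrite /hbeta (bigop.bigmax_eq_arg _ Pk); case: arg_maxnP => // i /eqP ->.
Qed.

Lemma hbeta_eq u m b : hmin u = Some m -> hgamma u b = Some m ->
  (forall k, hgamma u k = Some m -> k <= b) -> hbeta u = b.
Proof.
move=> Hm Gb maxb; apply/eqP; rewrite eqn_leq (leq_hbeta Hm Gb) andbT.
by apply/bigmax_leqP => i /eqP; rewrite Hm => /maxb.
Qed.

End GammaMinBeta.

Section FalseTwinSum.
Variable T : finType.
Implicit Types (u l r : dtree T) (A S X Sl Sr : {set T}).

Definition false_twin_sum u l r : Prop :=
  [/\ hV u = hV l :|: hV r, hTS u = hTS l :|: hTS r,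
      hE u =2 (fun x y => hE l x y || hE r x y) & [disjoint hV l & hV r]].

Lemma false_twin_sumC u l r : false_twin_sum u l r -> false_twin_sum u r l.
Proof.
by case=> hVu hTSu hEu dlr; split; rewrite 1?setUC 1?disjoint_sym // => x y; rewrite hEu orbC.
Qed.

Lemma false_twin_sum_Node l r :
  [disjoint hV l & hV r] -> false_twin_sum (Node FalseTwin l r) l r.
Proof. by split; rewrite ?hV_Node. Qed.

(* Only the left summand is treated here; the right one is reached through
   [false_twin_sumC]. *)
Variables u l r : dtree T.
Hypothesis sum_ulr : false_twin_sum u l r.

Lemma sum_edge_hVl x y : hE u x y -> (x \in hV l) = (y \in hV l).
Proof.
case: sum_ulr => _ _ -> dlr /orP[/hE_hV/andP[-> ->] // | /hE_hV/andP[xr yr]].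
by rewrite (disjointFl dlr xr) (disjointFl dlr yr).
Qed.

Lemma sum_edge_l x y : x \in hV l -> hE u x y -> hE l x y.
Proof.
case: sum_ulr => _ _ -> dlr xl /orP[// | /hE_hV/andP[xr _]].
by rewrite (disjointFl dlr xr) in xl.
Qed.

Lemma sum_setIU_hVl Sl Sr : Sl \subset hV l -> Sr \subset hV r -> (Sl :|: Sr) :&: hV l = Sl.
Proof.
case: sum_ulr => _ _ _ dlr sl sr; rewrite setIUl (setIidPl sl).
have /eqP -> : Sr :&: hV l == set0 by rewrite setI_eq0 disjoint_sym (disjointWr sr dlr).
exact: setU0.
Qed.

Lemma sum_hTS_hVl : hTS u :&: hV l = hTS l.
Proof. by case: sum_ulr => _ -> _ _; rewrite sum_setIU_hVl ?hTS_subset. Qed.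

Lemma sum_hVD_hVl : (hV u :\: hTS u) :&: hV l = hV l :\: hTS l.
Proof.
case: sum_ulr => hVu _ _ _; rewrite -sum_hTS_hVl; apply/setP => x.
rewrite !(in_setI, in_setD) hVu in_setU.
by case: (boolP (x \in hV l)) => xl; rewrite ?andbF ?andbT.
Qed.

Lemma sum_cnbhd_hVl S : cnbhd u S :&: hV l = cnbhd l (S :&: hV l).
Proof.
case: sum_ulr => hVu _ hEu _; apply/setP => y.
rewrite in_setI !in_cnbhd in_setI hVu in_setU.
case: (boolP (y \in hV l)) => yl; rewrite ?andbF ?andbT //=; congr (_ || _).
apply/existsP/existsP => -[x /andP[xS exy]]; exists x.
  have xl : x \in hV l by rewrite (sum_edge_hVl exy).
  by rewrite in_setI xS xl (sum_edge_l xl exy).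
by move: xS; rewrite in_setI hEu => /andP[-> _]; rewrite exy.
Qed.

Lemma sum_dominate_hVl Sl Sr : Sl \subset hV l -> Sr \subset hV r ->
  hV l :\: hTS l \subset cnbhd l Sl -> (hV u :\: hTS u) :&: hV l \subset cnbhd u (Sl :|: Sr).
Proof.
move=> sl sr; rewrite sum_hVD_hVl -{1}(sum_setIU_hVl sl sr) -sum_cnbhd_hVl => dom.
exact: subset_trans dom (subsetIl _ _).
Qed.

Lemma card_sum_split A : A \subset hV u -> #|A| = #|A :&: hV l| + #|A :&: hV r|.
Proof.
case: sum_ulr => hVu _ _ dlr sA; rewrite -(cardsID (hV l) A); congr (_ + _).
apply: eq_card => x; rewrite !(in_setD, in_setI).
case: (boolP (x \in A)) => [/(subsetP sA)|]; rewrite ?andbF // hVu in_setU andbT.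
by case/orP=> [xl|xr]; rewrite ?xl ?(disjointFr dlr xl) ?(disjointFl dlr xr).
Qed.

Lemma kfeasible_sum_restrict S X :
  hV u :\: hTS u \subset cnbhd u S -> X \subset S :&: hTS u -> has_pm (hE u) (S :\: X) ->
  kfeasible l #|X :&: hV l| (S :&: hV l).
Proof.
move=> dom sX /has_pmP[M pmM]; apply/kfeasibleP; split; first exact: subsetIr.
  by rewrite -sum_hVD_hVl -sum_cnbhd_hVl setSI.
exists (X :&: hV l); split=> //; first by rewrite -sum_hTS_hVl setIACA setIid setSI.
have -> : (S :&: hV l) :\: (X :&: hV l) = (S :\: X) :&: hV l.
  by apply/setP => x; rewrite !(in_setD, in_setI); case: (x \in hV l); rewrite ?andbF ?andbT.
apply/has_pmP; exists [set m in M | m \subset hV l].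
apply: perfect_matching_mono (perfect_matchingI _ pmM).
  by move=> x y; rewrite in_setI => /andP[_ xl] _; apply: sum_edge_l.
by move=> x y _ _; apply: sum_edge_hVl.
Qed.

End FalseTwinSum.

Section FalseTwinSumParameters.
Variables (T : finType) (u l r : dtree T).
Hypothesis sum_ulr : false_twin_sum u l r.

Lemma kfeasible_sum_split k S : kfeasible u k S ->
  exists k1 k2, [/\ k = k1 + k2, kfeasible l k1 (S :&: hV l) & kfeasible r k2 (S :&: hV r)].
Proof.
case/kfeasibleP=> sS dom [X [sX <- pmX]].
exists #|X :&: hV l|, #|X :&: hV r|; split.
- by have -> := card_sum_split sum_ulr (subset_trans (subset_trans sX (subsetIl _ _)) sS).
- exact (kfeasible_sum_restrict sum_ulr dom sX pmX).
- exact (kfeasible_sum_restrict (false_twin_sumC sum_ulr) dom sX pmX).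
Qed.

Lemma kfeasible_sum_union k1 k2 Sl Sr :
  kfeasible l k1 Sl -> kfeasible r k2 Sr -> kfeasible u (k1 + k2) (Sl :|: Sr).
Proof.
have [hVu hTSu hEu dlr] := sum_ulr; have sum_url := false_twin_sumC sum_ulr.
move=> /kfeasibleP[sl doml [Xl [sXl <- pml]]] /kfeasibleP[sr domr [Xr [sXr <- pmr]]].
have dS : [disjoint Sl & Sr] := disjointWl sl (disjointWr sr dlr).
have sXlSl : Xl \subset Sl := subset_trans sXl (subsetIl _ _).
have sXrSr : Xr \subset Sr := subset_trans sXr (subsetIl _ _).
apply/kfeasibleP; split; first by rewrite hVu setUSS.
  apply/subsetP => y yD; move: (subsetP (subsetDl _ _) y yD); rewrite hVu in_setU => /orP[yl|yr].
    by apply: (subsetP (sum_dominate_hVl sum_ulr sl sr doml)); rewrite in_setI yD yl.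
  by rewrite setUC; apply: (subsetP (sum_dominate_hVl sum_url sr sl domr)); rewrite in_setI yD yr.
exists (Xl :|: Xr); split.
- rewrite hTSu; apply/subsetP => x /setUP[/(subsetP sXl)|/(subsetP sXr)];
  by rewrite !(in_setI, in_setU) => /andP[-> ->]; rewrite ?orbT.
- by apply/eqP; rewrite (leq_card_setU Xl Xr).2 (disjointWl sXlSl (disjointWr sXrSr dS)).
have -> : (Sl :|: Sr) :\: (Xl :|: Xr) = (Sl :\: Xl) :|: (Sr :\: Xr).
  rewrite setDUl !setDUr (setDidPl (disjointWr sXrSr dS)).
  rewrite disjoint_sym in dS; rewrite (setDidPl (disjointWr sXlSl dS)).
  by rewrite (setIidPl (subsetDl _ _)) (setIidPr (subsetDl _ _)).
move/has_pmP: pml => [Ml pml]; move/has_pmP: pmr => [Mr pmr].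
apply/has_pmP; exists (Ml :|: Mr); apply: perfect_matchingU.
- exact: disjointWl (subsetDl _ _) (disjointWr (subsetDl _ _) dS).
- by apply: perfect_matching_mono pml => x y _ _ exy; rewrite hEu exy.
- by apply: perfect_matching_mono pmr => x y _ _ exy; rewrite hEu exy orbT.
Qed.

Lemma hgamma_sum_union k1 k2 a1 a2 : hgamma l k1 = Some a1 -> hgamma r k2 = Some a2 ->
  exists2 a, hgamma u (k1 + k2) = Some a & a <= a1 + a2.
Proof.
move=> /hgamma_feasible[Sl feasl <-] /hgamma_feasible[Sr feasr <-].
have [a Ga le_a] := kfeasible_hgamma (kfeasible_sum_union feasl feasr).
by exists a => //; apply: leq_trans le_a (leq_card_setU Sl Sr).
Qed.

Lemma hgamma_sum_split k a : hgamma u k = Some a ->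
  exists k1 k2 a1 a2,
    [/\ k = k1 + k2, hgamma l k1 = Some a1, hgamma r k2 = Some a2 & a1 + a2 <= a].
Proof.
case/hgamma_feasible=> S feasS <-; have [sS _ _] := kfeasibleP _ _ _ feasS.
have [k1 [k2 [-> feasl feasr]]] := kfeasible_sum_split feasS.
have [a1 G1 le1] := kfeasible_hgamma feasl; have [a2 G2 le2] := kfeasible_hgamma feasr.
by exists k1, k2, a1, a2; split; rewrite // (card_sum_split sum_ulr sS) leq_add.
Qed.

Variables ml mr : nat.
Hypotheses (hmin_l : hmin l = Some ml) (hmin_r : hmin r = Some mr).

Lemma hmin_sum_lower k a : hgamma u k = Some a -> ml + mr <= a.
Proof.
case/hgamma_sum_split=> k1 [k2 [a1 [a2 [_ G1 G2 le_a]]]].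
exact: leq_trans (leq_add (hmin_le hmin_l G1) (hmin_le hmin_r G2)) le_a.
Qed.

Lemma hgamma_sum_hbeta : hgamma u (hbeta l + hbeta r) = Some (ml + mr).
Proof.
have [a Ga le_a] := hgamma_sum_union (hgamma_hbeta hmin_l) (hgamma_hbeta hmin_r).
by rewrite Ga; congr Some; apply/eqP; rewrite eqn_leq le_a (hmin_sum_lower Ga).
Qed.

Lemma hmin_sum : hmin u = Some (ml + mr).
Proof.
apply/hminP; split; last exact: hmin_sum_lower.
by exists (hbeta l + hbeta r); apply: hgamma_sum_hbeta.
Qed.

Lemma hbeta_sum : hbeta u = hbeta l + hbeta r.
Proof.
apply: (hbeta_eq hmin_sum hgamma_sum_hbeta) => k.
case/hgamma_sum_split=> k1 [k2 [a1 [a2 [-> G1 G2 le_a]]]].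
have [a1_ml a2_mr] : a1 = ml /\ a2 = mr.
  by have := hmin_le hmin_l G1; have := hmin_le hmin_r G2; lia.
subst a1 a2; exact: leq_add (leq_hbeta hmin_l G1) (leq_hbeta hmin_r G2).
Qed.

End FalseTwinSumParameters.

Theorem lemma20 (T : finType) (G : rel T) (t : dtree T) :
  simple_graph G -> distance_hereditary G -> decomp_tree G t ->
  forall vl vr : dtree T,
    is_node (Node FalseTwin vl vr) t ->
    propP vl -> propP vr ->
    hbeta (Node FalseTwin vl vr) = hbeta vl + hbeta vr.
Proof.
move=> _ _ [uniq_t _] vl vr node_v [ml [hmin_l _]] [mr [hmin_r _]].
apply: hbeta_sum hmin_l hmin_r; apply: false_twin_sum_Node.
exact: uniq_disjoint_hV (is_node_uniq node_v uniq_t).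
Qed.
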